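(* Let $\gamma\in(0,1)$ and consider the following networked Markov game $MG$ with 4 agents $\mathcal N=\{1,2,3,4\}$ on the path graph with edges $\{(1,2),(2,3),(3,4)\}$. Each agent has local state space $\mathcal S_i=\{s_b,s_g\}$ and local action space $\mathcal A_i=\{a_b,a_g\}$. All agents start in $s_b$ at time $0$. Transitions are deterministic: $s_1(t+1)=s_g$ if $a_1(t)=a_g$ and $s_1(t+1)=s_b$ if $a_1(t)=a_b$; for $i\in\{2,3,4\}$, $s_i(t+1)=s_{i-1}(t)$. Rewards: $r_1=r_2=r_3\equiv0$, and $r_4(s_4,a_4)=1$ if $(s_4,a_4)=(s_g,a_g)$ and $0$ otherwise. Policies are local stationary policies $\xi_i:\mathcal S_i\to\Delta(\mathcal A_i)$. Then $MG$ is a $1$-NMPG, but it is not a Markov potential game.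
   Context: With $J_i(\xi)=\sum_{t\ge0}\gamma^t\mathbb E_\xi[r_i(s(t),a(t))]$, $\Xi_i$ the local policies of agent $i$ and $\Xi=\prod_i\Xi_i$: the game is a $\kappa_G$-NMPG if there are functions $\Phi_i:\Xi\to\mathbb R$, $i\in\mathcal N$, such that for every $i\in\mathcal N$, every $j$ with graph distance $\mathrm{dist}(i,j)\le\kappa_G$, all $\xi_j,\xi_j'\in\Xi_j$ and $\xi_{-j}\in\Xi_{-j}$: $J_j(\xi_j',\xi_{-j})-J_j(\xi_j,\xi_{-j})=\Phi_i(\xi_j',\xi_{-j})-\Phi_i(\xi_j,\xi_{-j})$. The game is a Markov potential game (MPG) if there is a single $\Phi:\Xi\to\mathbb R$ with $J_i(\xi_i',\xi_{-i})-J_i(\xi_i,\xi_{-i})=\Phi(\xi_i',\xi_{-i})-\Phi(\xi_i,\xi_{-i})$ for all $i$, $\xi_i,\xi_i'\in\Xi_i$, $\xi_{-i}\in\Xi_{-i}$. *)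

From mathcomp Require Import all_boot all_order all_algebra.
From mathcomp Require Import all_classical all_reals all_analysis.
Set Implicit Arguments. Unset Strict Implicit. Unset Printing Implicit Defensive.
Import Order.TTheory GRing.Theory Num.Theory.
Local Open Scope ring_scope.

(* Agents 1,2,3,4 are the ordinals 0,1,2,3 of 'I_4.
   Local states: false = s_b, true = s_g.  Local actions: false = a_b, true = a_g. *)
Definition gstate := {ffun 'I_4 -> bool}.
Definition gaction := {ffun 'I_4 -> bool}.

(* A local stationary policy xi_i : S_i -> Delta(A_i); xi s a = probability of a in s. *)
Definition lpolicy (R : realType) := bool -> bool -> R.
Definition is_lpolicy (R : realType) (p : lpolicy R) : Prop :=
  forall s : bool, (forall a : bool, 0 <= p s a) /\ p s false + p s true = 1.
Definition profile (R : realType) := 'I_4 -> lpolicy R.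

Definition trans (s : gstate) (a : gaction) : gstate :=
  [ffun i : 'I_4 => if val i == 0%N then a i else s (inord (val i).-1)].

Definition init_state : gstate := [ffun _ => false].

Definition reward (R : realType) (i : 'I_4) (s : gstate) (a : gaction) : R :=
  if (val i == 3%N) && s i && a i then 1 else 0.

Definition joint_prob (R : realType) (xi : profile R) (s : gstate) (a : gaction) : R :=
  \prod_(i < 4) xi i (s i) (a i).

Fixpoint state_dist (R : realType) (xi : profile R) (t : nat) (s' : gstate) : R :=
  match t with
  | 0%N => if s' == init_state then 1 else 0
  | t'.+1 => \sum_(s : gstate) \sum_(a : gaction)
               state_dist xi t' s * joint_prob xi s a * (if trans s a == s' then 1 else 0)
  end.

Definition exp_reward (R : realType) (xi : profile R) (i : 'I_4) (t : nat) : R :=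
  \sum_(s : gstate) \sum_(a : gaction) state_dist xi t s * joint_prob xi s a * @reward R i s a.

Definition J (R : realType) (gamma : R) (i : 'I_4) (xi : profile R) : R :=
  limn (fun n => \sum_(0 <= t < n) gamma ^+ t * exp_reward xi i t).

Definition deviate (n : nat) (P : Type) (xi : 'I_n -> P) (j : 'I_n) (p : P) : 'I_n -> P :=
  fun k => if k == j then p else xi k.

Definition is_kNMPG (R : realType) (n : nat) (P : Type) (valid : P -> Prop)
    (dist : 'I_n -> 'I_n -> nat) (kappa : nat) (Jf : 'I_n -> ('I_n -> P) -> R) : Prop :=
  exists Phi : 'I_n -> ('I_n -> P) -> R,
    forall (i j : 'I_n), (dist i j <= kappa)%N ->
    forall (xi : 'I_n -> P) (p' : P), (forall k, valid (xi k)) -> valid p' ->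
      Jf j (deviate xi j p') - Jf j xi = Phi i (deviate xi j p') - Phi i xi.

Definition is_MPG (R : realType) (n : nat) (P : Type) (valid : P -> Prop)
    (Jf : 'I_n -> ('I_n -> P) -> R) : Prop :=
  exists Phi : ('I_n -> P) -> R,
    forall (i : 'I_n) (xi : 'I_n -> P) (p' : P), (forall k, valid (xi k)) -> valid p' ->
      Jf i (deviate xi i p') - Jf i xi = Phi (deviate xi i p') - Phi xi.

Definition path_dist (i j : 'I_4) : nat := (maxn i j - minn i j)%N.

From mathcomp Require Import all_boot all_order all_algebra.
From mathcomp Require Import all_classical all_reals all_analysis.
From mathcomp Require Import ring zify.
Import Order.TTheory GRing.Theory Num.Theory.
Import numFieldNormedType.Exports.
Local Open Scope ring_scope.

(** Only agent 4 is ever rewarded, and s_4(t) = s_1(t - 3) is driven by the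
    action of agent 1 alone, so J_1 = J_2 = J_3 = 0 and J_4 depends only on the
    policies of agents 1 and 4.  Hence Phi_3 = Phi_4 = J_4 and Phi_1 = Phi_2 = 0
    is a 1-networked potential: the agents within distance 1 of agent 3 or 4,
    other than agent 4 itself, cannot affect J_4.  A global potential Phi would
    make the square of unilateral deviations in which agents 1 and 4 switch from
    a_b to a_g commute, forcing the interaction term of J_4,
    J_4(g,g) - J_4(g,b) - J_4(b,g) + J_4(b,b), to equal that of J_1, i.e. 0;
    yet the last three values vanish while J_4(g,g) > 0. *)

Section Deviations.
Variables (n : nat) (P : Type).
Implicit Types (xi : 'I_n -> P) (p q : P) (i j : 'I_n).

Lemma deviateC xi i j p q : i != j ->
  deviate (deviate xi i p) j q = deviate (deviate xi j q) i p.
Proof.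
move=> ij; apply: funext => k; rewrite /deviate.
by case: (eqVneq k j) => [->|//]; rewrite eq_sym (negbTE ij).
Qed.

Lemma deviate_valid (valid : P -> Prop) xi j p :
  (forall k, valid (xi k)) -> valid p -> forall k, valid (deviate xi j p k).
Proof. by move=> V Vp k; rewrite /deviate; case: ifP. Qed.

Lemma is_MPG_cross_difference (R : realType) (valid : P -> Prop)
    (Jf : 'I_n -> ('I_n -> P) -> R) :
  is_MPG valid Jf -> forall i j xi p q, i != j ->
  (forall k, valid (xi k)) -> valid p -> valid q ->
  Jf i (deviate (deviate xi j q) i p) - Jf i (deviate xi j q)
    - (Jf i (deviate xi i p) - Jf i xi) =
  Jf j (deviate (deviate xi i p) j q) - Jf j (deviate xi i p)
    - (Jf j (deviate xi j q) - Jf j xi).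
Proof.
move=> [Phi HPhi] i j xi p q ij V Vp Vq.
rewrite !HPhi //; try exact: deviate_valid.
rewrite (deviateC xi i j p q ij); ring.
Qed.

End Deviations.

Lemma sum_indicator_mul (V : pzSemiRingType) (T : finType) (x : T) (F : T -> V) :
  \sum_(y : T) (if y == x then 1 else 0) * F y = F x.
Proof. by rewrite (bigD1 x) //= eqxx mul1r big1 ?addr0 // => y /negbTE ->; rewrite mul0r. Qed.

Lemma discounted_sum_gt0 (R : realType) (gamma : R) (u : R ^nat) t0 :
  0 < gamma -> gamma < 1 -> (forall t, 0 <= u t <= 1) -> 0 < u t0 ->
  0 < limn (fun n => \sum_(0 <= t < n) gamma ^+ t * u t).
Proof.
move=> g0 g1 u01 ut0.
have term_ge0 t : 0 <= gamma ^+ t * u t.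
  by apply: mulr_ge0; [exact: exprn_ge0 (ltW g0) | case/andP: (u01 t)].
have cvg : cvgn (series (fun t => gamma ^+ t * u t)).
  apply: (series_le_cvg term_ge0 (v_ := geometric 1 gamma)).
  - by move=> t; rewrite /= mul1r exprn_ge0 ?ltW.
  - move=> t; rewrite /= mul1r; apply: ler_piMr; first exact: exprn_ge0 (ltW g0).
    by case/andP: (u01 t).
  - by apply: is_cvg_geometric_series; rewrite gtr0_norm.
have mono : nondecreasing_seq (series (fun t => gamma ^+ t * u t)).
  by apply: nondecreasing_series => t _ _; exact: term_ge0.
apply: lt_le_trans (nondecreasing_cvgn_le mono cvg t0.+1).
rewrite /series /= big_nat_recr //= ltr_pwDr ?mulr_gt0 ?exprn_gt0 //.
exact: sumr_ge0.
Qed.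

Local Notation agent1 := (ord0 : 'I_4).
Local Notation agent4 := (ord_max : 'I_4).

Section PathGame.
Context {R : realType}.

Definition is_lprofile (xi : profile R) := forall k, is_lpolicy (xi k).

Lemma lpolicy_sum1 (p : lpolicy R) s : is_lpolicy p -> \sum_(b : bool) p s b = 1.
Proof. by move=> /(_ s) [_ p1]; rewrite big_bool /= addrC. Qed.

Lemma sum_joint_prob_marginal (xi : profile R) s (k : 'I_4) (f : bool -> R) :
  is_lprofile xi ->
  \sum_(a : gaction) joint_prob xi s a * f (a k) = \sum_(b : bool) xi k (s k) b * f b.
Proof.
move=> V.
pose g i b := xi i (s i) b * (if i == k then f b else 1).
transitivity (\sum_(a : gaction) \prod_(i < 4) g i (a i)).
  apply: eq_bigr => a _; rewrite /joint_prob /g big_split /=; congr (_ * _).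
  by rewrite (bigD1 k) //= eqxx big1 ?mulr1 // => i /negbTE ->.
rewrite -(bigA_distr_bigA g) (bigD1 k) //= [X in _ * X]big1 ?mulr1 => [|i ik].
  by apply: eq_bigr => b _; rewrite /g eqxx.
by under eq_bigr do rewrite /g (negbTE ik) mulr1; exact: lpolicy_sum1.
Qed.

Definition const_action (b : bool) : gaction := [ffun=> b].

Lemma trans_agent1 s (a : gaction) : trans s a = trans s (const_action (a agent1)).
Proof.
apply/ffunP => i; rewrite !ffunE.
by case: ifP => // /eqP i0; congr (a _); exact: val_inj.
Qed.

Lemma state_distS (xi : profile R) t s' : is_lprofile xi ->
  state_dist xi t.+1 s' = \sum_(s : gstate) state_dist xi t s *
     \sum_(b : bool) xi agent1 (s agent1) b *
       (if trans s (const_action b) == s' then 1 else 0).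
Proof.
move=> V /=; apply: eq_bigr => s _.
pose f b : R := if trans s (const_action b) == s' then 1 else 0.
rewrite -(sum_joint_prob_marginal _ _ agent1 f V) mulr_sumr.
by apply: eq_bigr => a _; rewrite mulrA /f -trans_agent1.
Qed.

Lemma exp_reward_agent4 (xi : profile R) t : is_lprofile xi ->
  exp_reward xi agent4 t = \sum_(s : gstate) state_dist xi t s *
     \sum_(b : bool) xi agent4 (s agent4) b * reward R agent4 s (const_action b).
Proof.
move=> V; apply: eq_bigr => s _.
pose f b := reward R agent4 s (const_action b).
rewrite -(sum_joint_prob_marginal _ _ agent4 f V) mulr_sumr.
by apply: eq_bigr => a _; rewrite mulrA /f /reward ffunE.
Qed.

Lemma state_dist_agent1 (xi xi' : profile R) t :
  is_lprofile xi -> is_lprofile xi' -> xi agent1 = xi' agent1 ->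
  state_dist xi t =1 state_dist xi' t.
Proof.
move=> V V' E; elim: t => [//|t IH] s'.
by rewrite !state_distS // E; apply: eq_bigr => s _; rewrite IH.
Qed.

Lemma J_agent4_local gamma (xi xi' : profile R) :
  is_lprofile xi -> is_lprofile xi' ->
  xi agent1 = xi' agent1 -> xi agent4 = xi' agent4 ->
  J gamma agent4 xi = J gamma agent4 xi'.
Proof.
move=> V V' E1 E4; rewrite /J.
suff -> : exp_reward xi agent4 = exp_reward xi' agent4 by [].
apply: funext => t; rewrite !exp_reward_agent4 // E4.
by apply: eq_bigr => s _; rewrite (state_dist_agent1 _ _ t V V' E1).
Qed.

Lemma J_eq0 gamma i (xi : profile R) :
  (forall t, exp_reward xi i t = 0) -> J gamma i xi = 0.
Proof.
move=> r0; rewrite /J.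
suff -> : (fun n => \sum_(0 <= t < n) gamma ^+ t * exp_reward xi i t) = fun=> 0.
  exact: lim_cst.
by apply: funext => n; rewrite big1 // => t _; rewrite r0 mulr0.
Qed.

Lemma J_not_agent4 gamma (i : 'I_4) (xi : profile R) : i != agent4 -> J gamma i xi = 0.
Proof.
move=> i4; apply: J_eq0 => t; rewrite /exp_reward big1 // => s _; rewrite big1 // => a _.
by move: i4; rewrite /reward -val_eqE /= => /negbTE ->; rewrite mulr0.
Qed.

Definition pure_policy (b : bool) : lpolicy R := fun _ a => if a == b then 1 else 0.

Lemma pure_policy_lpolicy b : is_lpolicy (pure_policy b).
Proof.
move=> s; rewrite /pure_policy; split; first by move=> a; case: ifP.
by case: b; rewrite /= ?addr0 ?add0r.
Qed.

Lemma sum_pure_policy b (f : bool -> R) s :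
  \sum_(a : bool) pure_policy b s a * f a = f b.
Proof. by rewrite big_bool /pure_policy; case: b; rewrite /= mul1r mul0r ?addr0 ?add0r. Qed.

Definition run (c : bool) (t : nat) : gstate :=
  iter t (fun s => trans s (const_action c)) init_state.

Lemma runE c t (i : 'I_4) : run c t i = c && (val i < t)%N.
Proof.
elim: t i => [|t IH] i; first by rewrite ffunE andbF.
rewrite /run iterS -/(run c t) ffunE.
case: ifP => [/eqP -> | i0]; first by rewrite ffunE andbT.
case: i i0 => [[|i] lti] //= _.
have -> : inord i = Ordinal (ltnW lti) by apply: val_inj; exact: inordK (ltnW lti).
by rewrite IH.
Qed.

Lemma state_dist_pure (xi : profile R) c t s' :
  is_lprofile xi -> xi agent1 = pure_policy c ->
  state_dist xi t s' = if s' == run c t then 1 else 0.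
Proof.
move=> V E; elim: t s' => [//|t IH] s'.
rewrite state_distS // E.
under eq_bigr do rewrite IH.
by rewrite sum_indicator_mul sum_pure_policy eq_sym.
Qed.

Lemma J_agent4_pure gamma (xi : profile R) c d : is_lprofile xi ->
  xi agent1 = pure_policy c -> xi agent4 = pure_policy d ->
  J gamma agent4 xi = if c && d then
    limn (fun n => \sum_(0 <= t < n) gamma ^+ t * (if (3 < t)%N then 1 else 0)) else 0.
Proof.
move=> V E1 E4.
have reward_t t : exp_reward xi agent4 t = if c && d && (3 < t)%N then 1 else 0.
  rewrite exp_reward_agent4 //.
  under eq_bigr do rewrite (state_dist_pure _ _ t _ V E1).
  by rewrite sum_indicator_mul E4 sum_pure_policy /reward ffunE runE /= andbAC.
case: ifP => cd; last by apply: J_eq0 => t; rewrite reward_t cd.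
by rewrite /J; under eq_fun do under eq_bigr do rewrite reward_t cd.
Qed.

Lemma J_agent4_deviate gamma (xi : profile R) j p : is_lprofile xi -> is_lpolicy p ->
  j != agent1 -> j != agent4 -> J gamma agent4 (deviate xi j p) = J gamma agent4 xi.
Proof.
move=> V Vp j1 j4; apply: J_agent4_local => //; first exact: deviate_valid.
  by rewrite /deviate eq_sym (negbTE j1).
by rewrite /deviate eq_sym (negbTE j4).
Qed.

Definition path_potential gamma (i : 'I_4) (xi : profile R) : R :=
  if (2 <= val i)%N then J gamma agent4 xi else 0.

Lemma path_game_is_1NMPG gamma : is_kNMPG (@is_lpolicy R) path_dist 1 (J gamma).
Proof.
exists (path_potential gamma) => i j dij xi p V Vp; rewrite /path_potential.
have [j4 | j4] := eqVneq j agent4.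
  suff -> : (2 <= val i)%N by rewrite j4.
  by have := ltn_ord i; move: dij; rewrite j4 /path_dist /=; lia.
rewrite !(J_not_agent4 gamma _ _ j4) subrr.
case: ifP => [i2 | _]; last by rewrite subrr.
have j1 : j != agent1.
  by apply: contraTneq dij => ->; rewrite /path_dist maxn0 minn0 subn0 -ltnNge.
by rewrite J_agent4_deviate ?subrr.
Qed.

Lemma path_game_not_MPG gamma :
  0 < gamma -> gamma < 1 -> ~ is_MPG (@is_lpolicy R) (J gamma).
Proof.
move=> g0 g1 /is_MPG_cross_difference cross.
pose bad : profile R := fun=> pure_policy false.
pose good := pure_policy true : lpolicy R.
have Vbad : is_lprofile bad by move=> k; exact: pure_policy_lpolicy.
have Vgood : is_lpolicy good := pure_policy_lpolicy true.
have Vdev j xi : is_lprofile xi -> is_lprofile (deviate xi j good).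
  by move=> V; exact: deviate_valid.
have J_bb : J gamma agent4 bad = 0 := J_agent4_pure gamma _ _ _ Vbad erefl erefl.
have J_bg : J gamma agent4 (deviate bad agent4 good) = 0 :=
  J_agent4_pure gamma _ _ _ (Vdev agent4 _ Vbad) erefl erefl.
have J_gb : J gamma agent4 (deviate bad agent1 good) = 0 :=
  J_agent4_pure gamma _ _ _ (Vdev agent1 _ Vbad) erefl erefl.
have J_gg : 0 < J gamma agent4 (deviate (deviate bad agent1 good) agent4 good).
  rewrite (J_agent4_pure gamma _ _ _ (Vdev agent4 _ (Vdev agent1 _ Vbad)) erefl erefl).
  by apply: (@discounted_sum_gt0 R gamma _ 4) => // t; case: (3 < t)%N; rewrite ?lexx ?ler01.
have := cross agent4 agent1 bad good good isT Vbad Vgood Vgood.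
rewrite !(J_not_agent4 gamma agent1) // J_bb J_bg J_gb !subrr !subr0 => J_gg0.
by rewrite J_gg0 ltxx in J_gg.
Qed.

End PathGame.

Theorem mainTheorem4 (R : realType) (gamma : R) :
  0 < gamma -> gamma < 1 ->
  is_kNMPG (@is_lpolicy R) path_dist 1 (J gamma) /\
  ~ is_MPG (@is_lpolicy R) (J gamma).
Proof.
move=> g0 g1; split; first exact: path_game_is_1NMPG.
exact: path_game_not_MPG.
Qed.
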